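(* For all positive integers $t,s$, the complete bipartite graph $K_{4t,4s}$ has an almost 2-perfect 8-cycle decomposition.
   Context: An 8-cycle decomposition of a graph $G$ is a collection of pairwise edge-disjoint 8-cycles in $G$ whose edge sets partition $E(G)$. For an 8-cycle $C$, an inside 8-cycle of $C$ is an 8-cycle on the same vertex set as $C$ sharing no edge with $C$. An 8-cycle decomposition $\mathcal{C}$ of $G$ is almost 2-perfect (A2P) if one can choose, for each $C\in\mathcal{C}$, an inside 8-cycle $C'$ of $C$ with all edges in $G$, such that the chosen cycles $\{C'\}$ again form an 8-cycle decomposition of $G$. *)

From mathcomp Require Import all_boot.
Set Implicit Arguments. Unset Strict Implicit. Unset Printing Implicit Defensive.

Section Cycles.
Variables (T : finType) (e : rel T).

(* Edge set of a simple graph given by a symmetric irreflexive relation e: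
   edges are unordered pairs {x,y}, represented as 2-element sets. *)
Definition graph_edges : {set {set T}} :=
  [set [set p.1; p.2] | p in [set p : T * T | e p.1 p.2]].

Definition is_8cycle (c : seq T) : bool :=
  [&& size c == 8, uniq c & path.cycle e c].

Definition cycle_edges (c : seq T) : {set {set T}} :=
  [set [set x; next c x] | x in c].

Definition cycle_verts (c : seq T) : {set T} := [set x in c].

Definition is_8cycle_decomp (C : seq (seq T)) : Prop :=
  [/\ forall c, c \in C -> is_8cycle c,
      forall i j, i < size C -> j < size C -> i != j ->
        [disjoint cycle_edges (nth [::] C i) & cycle_edges (nth [::] C j)]
    & \bigcup_(c <- C) cycle_edges c = graph_edges].

Definition inside_8cycle (c d : seq T) : bool :=
  [&& is_8cycle d, cycle_verts d == cycle_verts c &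
      [disjoint cycle_edges d & cycle_edges c]].

Definition almost_2_perfect (C : seq (seq T)) : Prop :=
  exists D : seq (seq T),
    [/\ size D = size C,
        forall i, i < size C -> inside_8cycle (nth [::] C i) (nth [::] D i)
      & is_8cycle_decomp D].

End Cycles.

Definition Kbip_rel (m n : nat) : rel ('I_m + 'I_n)%type :=
  fun x y => match x, y with
             | inl _, inr _ | inr _, inl _ => true
             | _, _ => false
             end.

(* Cut each side of K_{4t,4s} into blocks of four vertices.  Between blocks
   {a_0,..,a_3} and {b_0,..,b_3} the graph is a K_{4,4}, and it splits into the
   two 8-cycles a_0 b_0 a_1 b_1 a_2 b_2 a_3 b_3 and a_0 b_1 a_3 b_0 a_2 b_3 a_1 b_2.
   These have the same vertex set and complementary edge sets, so each is an
   inside 8-cycle of the other: replacing every cycle of the decomposition by its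
   partner gives back the same family of cycles, hence again a decomposition. *)

From mathcomp Require Import all_boot zify.
Set Implicit Arguments. Unset Strict Implicit. Unset Printing Implicit Defensive.

Section CycleDecompositions.
Variables (T : finType) (e : rel T).

Lemma cycle_edges_sub_graph_edges (c : seq T) :
  path.cycle e c -> cycle_edges c \subset graph_edges e.
Proof.
move=> ec; apply/subsetP => _ /imsetP[x xc ->].
by apply/imsetP; exists (x, next c x); rewrite // inE /= (next_cycle ec).
Qed.

Lemma edge_mem_cycle_edges (c : seq T) x y :
  (x \in c) && (next c x == y) || (y \in c) && (next c y == x) ->
  [set x; y] \in cycle_edges c.
Proof.
case/orP=> /andP[xc /eqP <-]; first exact: imset_f.
by rewrite setUC; apply: imset_f.
Qed.

Variables (K : finType) (cyc : K -> seq T).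
Hypotheses (cyc_8cycle : forall k, is_8cycle e (cyc k))
  (cyc_disjoint : forall k k', k != k' ->
     [disjoint cycle_edges (cyc k) & cycle_edges (cyc k')])
  (cyc_cover : forall X, X \in graph_edges e ->
     exists k, X \in cycle_edges (cyc k)).

Lemma is_8cycle_decomp_map (ks : seq K) : uniq ks -> (forall k, k \in ks) ->
  is_8cycle_decomp e (map cyc ks).
Proof.
move=> ks_uniq ks_all; split.
- by move=> _ /mapP[k _ ->].
- move=> i j; rewrite size_map => ilt jlt ij.
  have k0 : K by move: ilt; case: ks {jlt ks_uniq ks_all}.
  by rewrite !(nth_map k0) //; apply: cyc_disjoint; rewrite nth_uniq.
- apply/eqP; rewrite eqEsubset big_map bigcup_seq; apply/andP; split.
    apply/bigcupsP => k _; apply: cycle_edges_sub_graph_edges.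
    by case/and3P: (cyc_8cycle k).
  by apply/subsetP => X /cyc_cover[k Xk]; apply/bigcupP; exists k.
Qed.

End CycleDecompositions.

Section Blocks.
Variable n : nat.

Lemma in_block_subproof (p : 'I_n) i : 4 * p + i %% 4 < 4 * n.
Proof. have := ltn_pmod i (isT : 0 < 4); have := ltn_ord p; lia. Qed.
Definition in_block (p : 'I_n) i : 'I_(4 * n) := Ordinal (in_block_subproof p i).

Lemma block_subproof (a : 'I_(4 * n)) : a %/ 4 < n.
Proof. have := ltn_ord a; lia. Qed.
Definition block (a : 'I_(4 * n)) : 'I_n := Ordinal (block_subproof a).

Lemma in_block_eq (p : 'I_n) i j : (in_block p i == in_block p j) = (i %% 4 == j %% 4).
Proof. by rewrite -val_eqE /= eqn_add2l. Qed.

Lemma in_blockK (p : 'I_n) i : block (in_block p i) = p.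
Proof. apply: val_inj => /=; have := ltn_pmod i (isT : 0 < 4); lia. Qed.

Lemma in_block_mod (p : 'I_n) i : in_block p i %% 4 = i %% 4.
Proof. rewrite /=; have := ltn_pmod i (isT : 0 < 4); lia. Qed.

Lemma blockK (a : 'I_(4 * n)) : in_block (block a) a = a.
Proof. by apply: val_inj => /=; lia. Qed.

Lemma in_block_modE (p : 'I_n) i : in_block p (i %% 4) = in_block p i.
Proof. by apply: val_inj => /=; rewrite modn_mod. Qed.

End Blocks.

Section SumEq.
Variables A B : eqType.
Lemma inl_eq (a a' : A) : (inl a == inl a' :> A + B) = (a == a'). Proof. by []. Qed.
Lemma inr_eq (b b' : B) : (inr b == inr b' :> A + B) = (b == b'). Proof. by []. Qed.
Lemma inl_inr_eq (a : A) (b : B) : (inl a == inr b :> A + B) = false. Proof. by []. Qed.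
Lemma inr_inl_eq (a : A) (b : B) : (inr b == inl a :> A + B) = false. Proof. by []. Qed.
End SumEq.

Lemma doubleton_inl_inr_inj (A B : finType) (a a' : A) (b b' : B) :
  [set inl a; inr b] = [set inl a'; inr b'] :> {set A + B} -> a = a' /\ b = b'.
Proof.
move=> E.
have : (inl a : A + B) \in [set inl a'; inr b'] by rewrite -E set21.
have : (inr b : A + B) \in [set inl a'; inr b'] by rewrite -E set22.
by rewrite !inE inl_eq inr_eq inl_inr_eq inr_inl_eq orbF => /eqP -> /eqP ->.
Qed.

Lemma Kbip_graph_edge_inv m n (X : {set 'I_m + 'I_n}) :
  X \in graph_edges (@Kbip_rel m n) -> exists a b, X = [set inl a; inr b].
Proof.
case/imsetP=> [[[a|b] [a'|b']]] //; rewrite inE //= => _ ->.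
  by exists a, b'.
by exists a', b; rewrite setUC.
Qed.

Section BlockCycles.
Context {t s : nat}.

Local Notation V := ('I_(4 * t) + 'I_(4 * s))%type.
Local Notation label := ('I_t * 'I_s * bool)%type.

Definition block_cycle (k : label) : seq V :=
  let: (p, q, c) := k in
  if c then [:: inl (in_block p 0); inr (in_block q 1); inl (in_block p 3);
                inr (in_block q 0); inl (in_block p 2); inr (in_block q 3);
                inl (in_block p 1); inr (in_block q 2)]
  else [:: inl (in_block p 0); inr (in_block q 0); inl (in_block p 1);
           inr (in_block q 1); inl (in_block p 2); inr (in_block q 2);
           inl (in_block p 3); inr (in_block q 3)].

(* The cycles of class false and true use the edges a_i b_j of a pair of
   blocks with j - i = 0, 3 and j - i = 1, 2 (mod 4) respectively. *)
Definition edge_class (a b : nat) : bool := 1 < (a %% 4 + 4 - b %% 4) %% 4.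

Definition edge_label (a : 'I_(4 * t)) (b : 'I_(4 * s)) : label :=
  (block a, block b, edge_class a b).

Definition swap_class (k : label) : label := (k.1, ~~ k.2).

Lemma swap_classK : involutive swap_class.
Proof. by case=> pq c; rewrite /swap_class negbK. Qed.

Let eqE := (inl_eq, inr_eq, inl_inr_eq, inr_inl_eq, in_block_eq).

Lemma block_cycle_8cycle k : is_8cycle (@Kbip_rel _ _) (block_cycle k).
Proof. by case: k => [[p q] []]; rewrite /is_8cycle /= !inE !eqE. Qed.

Lemma block_cycle_edge_inv k X : X \in cycle_edges (block_cycle k) ->
  exists a b, X = [set inl a; inr b] /\ edge_label a b = k.
Proof.
case/imsetP=> x; case: k => [[p q] []] /= xc ->.
all: do !case/predU1P: xc => [->|xc] //; rewrite /= ?eqE /=;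
  match goal with
  | |- exists a b, [set inl ?A; inr ?B] = _ /\ _ => exists A, B
  | |- exists a b, [set inr ?B; inl ?A] = _ /\ _ => exists A, B; rewrite setUC
  end;
  by rewrite /edge_label !in_blockK /edge_class !in_block_mod.
Qed.

Lemma in_block_edge_in_block_cycle p q i j : i < 4 -> j < 4 ->
  [set inl (in_block p i); inr (in_block q j)]
    \in cycle_edges (block_cycle (p, q, edge_class i j)).
Proof.
case: i => [|[|[|[|//]]]] _; case: j => [|[|[|[|//]]]] _.
all: by apply: edge_mem_cycle_edges; rewrite !inE /= !eqE.
Qed.

Lemma edge_in_block_cycle a b :
  [set inl a; inr b] \in cycle_edges (block_cycle (edge_label a b)).
Proof.
have := in_block_edge_in_block_cycle (block a) (block b)
  (ltn_pmod a (isT : 0 < 4)) (ltn_pmod b (isT : 0 < 4)).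
by rewrite !in_block_modE !blockK /edge_label /edge_class !modn_mod.
Qed.

Lemma block_cycles_disjoint k k' : k != k' ->
  [disjoint cycle_edges (block_cycle k) & cycle_edges (block_cycle k')].
Proof.
move=> kk'; rewrite disjoint_subset; apply/subsetP => X.
move=> /block_cycle_edge_inv[a [b [-> lab]]]; rewrite inE -lab in kk' *.
apply: contra kk' => /block_cycle_edge_inv[a' [b' [/doubleton_inl_inr_inj[<- <-] <-]]].
exact: eqxx.
Qed.

Lemma block_cycles_cover X : X \in graph_edges (@Kbip_rel _ _) ->
  exists k, X \in cycle_edges (block_cycle k).
Proof.
by case/Kbip_graph_edge_inv=> a [b ->]; exists (edge_label a b); apply: edge_in_block_cycle.
Qed.

Lemma cycle_verts_swap_class k :
  cycle_verts (block_cycle (swap_class k)) = cycle_verts (block_cycle k).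
Proof.
case: k => [[p q] c]; apply/eqP; rewrite eqEsubset.
by case: c; apply/andP; split; apply/subsetP=> x; rewrite !inE;
  do ?[case/orP=> [/eqP->|] | move/eqP->]; rewrite ?eqxx ?orbT.
Qed.

Lemma inside_block_cycle k :
  inside_8cycle (@Kbip_rel _ _) (block_cycle k) (block_cycle (swap_class k)).
Proof.
rewrite /inside_8cycle block_cycle_8cycle cycle_verts_swap_class eqxx.
rewrite block_cycles_disjoint //; case: k => pq c.
by rewrite /swap_class xpair_eqE eqxx; case: c.
Qed.

End BlockCycles.

Theorem lemma2p1 (t s : nat) : 0 < t -> 0 < s ->
  exists C : seq (seq ('I_(4 * t) + 'I_(4 * s))%type),
    is_8cycle_decomp (@Kbip_rel (4 * t) (4 * s)) C /\
    almost_2_perfect (@Kbip_rel (4 * t) (4 * s)) C.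
Proof.
move=> t_gt0 s_gt0; set ks := enum [set: 'I_t * 'I_s * bool].
have ks_uniq : uniq ks := enum_uniq _.
have ks_all k : k \in ks by rewrite mem_enum inE.
exists (map block_cycle ks); split.
  apply: (is_8cycle_decomp_map _ _ _ ks_uniq ks_all) => [k | k k' | X].
  - exact: block_cycle_8cycle.
  - exact: block_cycles_disjoint.
  - exact: block_cycles_cover.
exists (map (block_cycle \o swap_class) ks); split.
- by rewrite !size_map.
- move=> i; rewrite size_map => ilt; pose k0 := (Ordinal t_gt0, Ordinal s_gt0, true).
  by rewrite !(nth_map k0) //; apply: inside_block_cycle.
apply: (is_8cycle_decomp_map _ _ _ ks_uniq ks_all) => [k | k k' | X].
- exact: block_cycle_8cycle.
- by rewrite -(can_eq swap_classK); apply: block_cycles_disjoint.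
- by case/block_cycles_cover=> k Xk; exists (swap_class k); rewrite /comp swap_classK.
Qed.
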